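(* Let $T_1,T_2$ be tables joined on column $J$, $T_1$ having a real-valued column $W$, let $\epsilon_1,\epsilon_2\in(0,1]$ and $p\in[\max\{\epsilon_1,\epsilon_2\},1]$. If $S_1=\mathrm{UBS}_{p,\epsilon_1/p}(T_1,J)$, $S_2=\mathrm{UBS}_{p,\epsilon_2/p}(T_2,J)$ and $\hat J_{\mathrm{sum}}=\frac{p}{\epsilon_1\epsilon_2}\sum_{(t_1,t_2)\in S_1\bowtie_J S_2}t_1.W$, then $$\mathrm{Var}[\hat J_{\mathrm{sum}}]=\Big(\frac1{\epsilon_2}-\frac1p\Big)\beta_1+\Big(\frac1{\epsilon_1}-\frac1p\Big)\beta_2+\Big(\frac{p}{\epsilon_1\epsilon_2}-\frac1{\epsilon_1}-\frac1{\epsilon_2}+\frac1p\Big)\beta_3+\Big(\frac1p-1\Big)\beta_4,$$ where $\beta_1=\sum_v a_v^2\mu_v^2b_v$, $\beta_2=\sum_v a_v(\mu_v^2+\sigma_v^2)b_v^2$, $\beta_3=\sum_v a_v(\mu_v^2+\sigma_v^2)b_v$, $\beta_4=\sum_v a_v^2\mu_v^2b_v^2$.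
   Context: $T_1,T_2$ are finite multisets of tuples with a join attribute $J$ taking values in a finite set $\mathcal U$; $a_v$ (resp. $b_v$) is the number of tuples of $T_1$ (resp. $T_2$) with $J$-value $v$. For each $v$ with $a_v>0$, $\mu_v$ and $\sigma_v^2$ are the mean and (population) variance of the $W$-values of the tuples of $T_1$ with $J$-value $v$; terms with $a_v=0$ contribute $0$. $X\bowtie_J Y$ is the set of pairs $(t_1,t_2)\in X\times Y$ with $t_1.J=t_2.J$. $\mathrm{UBS}_{p,q}(T,J)$: given a hash function $h:\mathcal U\to[0,1]$, each tuple $t\in T$ with $h(t.J)<p$ is included independently with probability $q$; others are excluded. The values $h(v)$ are independent uniform on $[0,1]$, the same $h$ is used for both tables, and the Bernoulli coins are independent across all tuples and independent of $h$. *)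

From HB Require Import structures.
From mathcomp Require Import all_boot all_order all_algebra.
From mathcomp Require Import all_classical all_reals all_analysis.
Set Implicit Arguments. Unset Strict Implicit. Unset Printing Implicit Defensive.
Import Order.TTheory GRing.Theory Num.Theory.
Local Open Scope classical_set_scope.
Local Open Scope ring_scope.

(* Mutual independence of a finite family of real random variables:
   the product rule for every choice of Borel sets (choosing [setT]
   for some indices gives the rule for every subfamily). *)
Definition mutually_independent {d} {Omega : measurableType d} {R : realType}
  (P : probability Omega R) {I : finType} (X : I -> Omega -> R) : Prop :=
  forall A : I -> set R, (forall i, measurable (A i)) ->
    P (\bigcap_(i in [set: I]) (X i @^-1` A i)) =
    (\prod_(i : I) P (X i @^-1` A i))%E.

Definition uniform01 {d} {Omega : measurableType d} {R : realType}
  (P : probability Omega R) (X : Omega -> R) : Prop :=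
  forall A : set R, measurable A ->
    P (X @^-1` A) = (@lebesgue_measure R) (A `&` `[0%R, 1%R]).

Definition bernoulli_coin {d} {Omega : measurableType d} {R : realType}
  (P : probability Omega R) (q : R) (X : Omega -> R) : Prop :=
  P (X @^-1` [set 1%R]) = q%:E /\ P (X @^-1` [set 0%R]) = (1 - q)%:E.

(* Tables: T1 (resp. T2) is a finite index type of tuples (a multiset),
   J1 / J2 give the join attribute, W the W-column of T1. *)
Section stats.
Variables (R : realType) (U T1 T2 : finType) (J1 : T1 -> U) (J2 : T2 -> U)
  (W : T1 -> R).

Definition a_ (v : U) : R := #|[set t : T1 | J1 t == v]|%:R.
Definition b_ (v : U) : R := #|[set t : T2 | J2 t == v]|%:R.
(* mean / population variance of W over tuples of T1 with J = v;
   when a_v = 0 these are 0 (and every term they appear in has a factor a_v). *)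
Definition mu_ (v : U) : R := (\sum_(t : T1 | J1 t == v) W t) / a_ v.
Definition sigma2_ (v : U) : R :=
  (\sum_(t : T1 | J1 t == v) (W t - mu_ v) ^+ 2) / a_ v.

Definition beta1 : R := \sum_(v : U) a_ v ^+ 2 * mu_ v ^+ 2 * b_ v.
Definition beta2 : R := \sum_(v : U) a_ v * (mu_ v ^+ 2 + sigma2_ v) * b_ v ^+ 2.
Definition beta3 : R := \sum_(v : U) a_ v * (mu_ v ^+ 2 + sigma2_ v) * b_ v.
Definition beta4 : R := \sum_(v : U) a_ v ^+ 2 * mu_ v ^+ 2 * b_ v ^+ 2.
End stats.

(* The joined estimator.  h v w : hash value of v in outcome w;
   c1 t w, c2 t w : Bernoulli coin of tuple t.  A tuple t of T1 is in S1
   iff h (J1 t) < p and its coin is 1 (similarly for T2). *)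
Definition Jsum_hat {d} {Omega : measurableType d} {R : realType}
  (U T1 T2 : finType) (J1 : T1 -> U) (J2 : T2 -> U) (W : T1 -> R)
  (p e1 e2 : R) (h : U -> Omega -> R) (c1 : T1 -> Omega -> R)
  (c2 : T2 -> Omega -> R) : Omega -> R :=
  fun w => p / (e1 * e2) *
    \sum_(t1 : T1) \sum_(t2 : T2 | J1 t1 == J2 t2)
      ((h (J1 t1) w < p) && (c1 t1 w == 1) &&
       (h (J2 t2) w < p) && (c2 t2 w == 1))%:R * W t1.

Definition all_rvs {Omega : Type} {R : Type} (U T1 T2 : Type)
  (h : U -> Omega -> R) (c1 : T1 -> Omega -> R) (c2 : T2 -> Omega -> R)
  (i : U + (T1 + T2)) : Omega -> R :=
  match i with
  | inl v => h v
  | inr (inl t) => c1 t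
  | inr (inr t) => c2 t
  end.

(** The estimator is a combination, over the pairs (t1, t2) with equal join
   values, of the indicators of the events E(t1, t2) = "h (J t1) < p and the
   coins of t1 and of t2 are heads", and the variance of a combination
   sum_k r_k 1_{E_k} is sum_{k,k'} r_k r_k' P(E_k & E_k') - (sum_k r_k P(E_k))^2.
   The event E(t1, t2) & E(t1', t2') asks finitely many distinct independent
   variables to succeed (one hash per distinct join value, one coin per
   distinct tuple), so its probability is p^#{J t1, J t1'} q1^#{t1, t1'}
   q2^#{t2, t2'} with q_i = e_i / p.  Grouping the pairs by join value, the
   terms with distinct values only build the square of the mean, and the
   variance is a sum over join values v of diagonal terms, which are
   polynomials in a_v, a_v mu_v, a_v (mu_v^2 + sigma_v^2) and b_v. *)

From HB Require Import structures.
From mathcomp Require Import all_boot all_order all_algebra.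
From mathcomp Require Import all_classical all_reals all_analysis.
From mathcomp Require Import ring.
Import Order.TTheory GRing.Theory Num.Theory.
Local Open Scope classical_set_scope.
Local Open Scope ring_scope.

Lemma sumr_option (V : nmodType) (I : finType) (F : option I -> V) :
  \sum_(o : option I) F o = F None + \sum_i F (Some i).
Proof.
rewrite (bigD1 None) //=; congr (_ + _).
rewrite (reindex_omap Some id) //=; last by case.
by apply: eq_bigl => i; rewrite eqxx.
Qed.

Lemma exprS_neq {R : pzRingType} {T : eqType} (x : R) (a b : T) :
  x ^+ (a != b).+1 = x ^+ 2 + (a == b)%:R * (x - x ^+ 2).
Proof. by case: eqVneq => _; rewrite /= ?mul1r ?mul0r ?addr0 // addrC subrK. Qed.

Lemma set_mem_setU (T : finType) (A B : {set T}) :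
  [set` A :|: B] = [set` A] `|` [set` B].
Proof. by apply/seteqP; split => i /=; rewrite finset.in_setU => /orP. Qed.

Section indicator_combination.
Context {R : realType} {d : measure_display} {Omega : measurableType d}
  (P : probability Omega R).

Lemma expectation_indic_comb (I : finType) (r : I -> R) (A : I -> set Omega) :
  (forall i, measurable (A i)) ->
  'E_P[fun w => (\sum_i r i * \1_(A i) w)%R]%E = (\sum_i r i * fine (P (A i)))%:E.
Proof.
move=> mA; rewrite unlock.
under eq_integral do rewrite -sumEFin.
rewrite integral_sum //; last first.
  move=> i; under eq_fun do rewrite EFinM.
  by apply: integrableZl => //; exact: integrable_indic.
rewrite -sumEFin; apply: eq_bigr => i _.
under eq_integral do rewrite EFinM.
rewrite integralZl //; last exact: integrable_indic.
by rewrite integral_indic // setIT EFinM fineK // fin_num_measure.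
Qed.

Lemma indic_comb_mul (I : finType) (r s : I -> R) (A B : I -> set Omega) w :
  (\sum_i r i * \1_(A i) w) * (\sum_j s j * \1_(B j) w) =
  \sum_(k : I * I) r k.1 * s k.2 * \1_(A k.1 `&` B k.2) w.
Proof.
rewrite -(pair_bigA _ (fun i j => r i * s j * \1_(A i `&` B j) w)) /=.
rewrite mulr_suml; apply: eq_bigr => i _.
by rewrite mulr_sumr; apply: eq_bigr => j _; rewrite indicI mulrACA.
Qed.

Lemma variance_indic_comb (I : finType) (r : I -> R) (A : I -> set Omega) :
  (forall i, measurable (A i)) ->
  'V_P[fun w => \sum_i r i * \1_(A i) w] =
  (\sum_i \sum_j r i * r j * fine (P (A i `&` A j))
   - (\sum_i r i * fine (P (A i))) ^+ 2)%:E.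
Proof.
move=> mA; set Y := fun w => _; set m := \sum_i r i * fine (P (A i)).
rewrite /variance unlock expectation_indic_comb //=.
(* [Y - m] is again a combination of indicators, with the constant [- m] on [setT]. *)
pose r' (o : option I) := if o is Some i then r i else - m.
pose A' (o : option I) := if o is Some i then A i else setT.
have mA' o : measurable (A' o) by case: o => [i|] /=; [exact: mA | exact: measurableT].
have centered w : Y w - m = \sum_o r' o * \1_(A' o) w.
  by rewrite sumr_option /= /indic mem_set // mulr1 addrC.
rewrite (_ : _ * _ = fun w => \sum_(k : option I * option I)
    r' k.1 * r' k.2 * \1_(A' k.1 `&` A' k.2) w); last first.
  by apply/funext => w; rewrite -indic_comb_mul -centered.
rewrite expectation_indic_comb; last by move=> k; exact: measurableI.
congr (_%:E); rewrite -(pair_bigA _ (fun o o' => r' o * r' o' * fine (P (A' o `&` A' o')))) /=.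
rewrite !sumr_option /= setIT probability_setT.
under [X in _ + X + _]eq_bigr do rewrite setTI.
under [X in _ + X = _]eq_bigr do rewrite sumr_option /= setIT.
have sum_scaled (c : R) : \sum_i c * r i * fine (P (A i)) = c * m.
  by rewrite /m mulr_sumr; apply: eq_bigr => i _; rewrite mulrA.
rewrite big_split /= sum_scaled.
under [X in _ + (X + _) = _]eq_bigr => i _ do rewrite [r i * _]mulrC.
by rewrite sum_scaled; ring.
Qed.
End indicator_combination.

Section independent_family.
Context {R : realType} {d : measure_display} {Omega : measurableType d}
  {P : probability Omega R} {I : finType} {X : I -> Omega -> R}.
Hypothesis X_indep : mutually_independent P X.

Lemma prob_bigcap_independent (D : {set I}) (S : I -> set R) :
  (forall i, measurable (S i)) ->
  P (\bigcap_(i in [set` D]) X i @^-1` S i) = (\prod_(i in D) P (X i @^-1` S i))%E.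
Proof.
move=> mS; pose S' i := if i \in D then S i else setT.
have -> : \bigcap_(i in [set` D]) X i @^-1` S i = \bigcap_(i in setT) X i @^-1` S' i.
  apply/seteqP; split=> w Dw i Di; rewrite /S'.
    by case: ifPn => // iD; exact: Dw.
  by have := Dw i Logic.I; rewrite /S' ifT.
rewrite X_indep; last by move=> i; rewrite /S'; case: ifP.
rewrite [RHS]big_mkcond; apply: eq_bigr => i _; rewrite /S'.
by case: ifP => // _; rewrite preimage_setT probability_setT.
Qed.
End independent_family.

Lemma uniform01_lt {R : realType} {d : measure_display} {Omega : measurableType d}
    (P : probability Omega R) (X : Omega -> R) (p : R) :
  uniform01 P X -> 0 <= p <= 1 -> P (X @^-1` [set` `]-oo, p[]) = p%:E.
Proof.
move=> unifX /andP[p0 p1]; rewrite unifX //.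
have -> : [set` `]-oo, p[] `&` `[0, 1] = [set` `[0, p[].
  apply/seteqP; split => x /=; rewrite !in_itv /= ?andbT.
    by move=> [xp /andP[-> _]].
  by move=> /andP[x0 xp]; rewrite x0 xp (le_trans (ltW xp)).
rewrite lebesgue_measure_itv /= lte_fin -EFinD subr0.
by move: p0; rewrite le_eqVlt => /orP[/eqP <-|->]; rewrite ?ltxx.
Qed.

Section sampled_pairs.
Context {R : realType} {d : measure_display} {Omega : measurableType d}
  {P : probability Omega R} {U T1 T2 : finType} {J1 : T1 -> U} {p q1 q2 : R}
  {h : U -> Omega -> R} {c1 : T1 -> Omega -> R} {c2 : T2 -> Omega -> R}.
Hypothesis meas : forall i, measurable_fun setT (all_rvs h c1 c2 i).
Hypothesis indep : mutually_independent P (all_rvs h c1 c2).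
Hypothesis h_lt : forall u, P (h u @^-1` [set` `]-oo, p[]) = p%:E.
Hypothesis c1_eq1 : forall t, P (c1 t @^-1` [set 1]) = q1%:E.
Hypothesis c2_eq1 : forall t, P (c2 t @^-1` [set 1]) = q2%:E.

(* Only the hash of [J1 k.1] is tested: the event is only used for matching
   pairs, where [J2 k.2 = J1 k.1]. *)
Definition pair_sampled (k : T1 * T2) : set Omega :=
  [set w | h (J1 k.1) w < p /\ c1 k.1 w = 1 /\ c2 k.2 w = 1].

Definition sampling_success (i : U + (T1 + T2)) : set R :=
  if i is inl _ then [set` `]-oo, p[] else [set 1].

Definition sampling_indices (k : T1 * T2) : {set U + (T1 + T2)} :=
  [set inl (J1 k.1); inr (inl k.1); inr (inr k.2)].

Lemma measurable_sampling_success i : measurable (sampling_success i).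
Proof. by case: i => [u|i]; [exact: measurable_itv | exact: measurable_set1]. Qed.

Lemma pair_sampledE k : pair_sampled k =
  \bigcap_(i in [set` sampling_indices k]) all_rvs h c1 c2 i @^-1` sampling_success i.
Proof.
apply/seteqP; split => w.
  move=> [hw [c1w c2w]] i; rewrite /= !inE.
  by case/orP => [/orP[]|] /eqP -> //=; rewrite in_itv.
move=> sw; split; last split.
- by have := sw (inl (J1 k.1)); rewrite /= in_itv /= !inE eqxx; apply.
- by have := sw (inr (inl k.1)); rewrite /= !inE eqxx orbT; apply.
- by have := sw (inr (inr k.2)); rewrite /= !inE eqxx !orbT; apply.
Qed.

Lemma prob_pair_sampledI k k' :
  P (pair_sampled k `&` pair_sampled k') =
  (p ^+ (J1 k.1 != J1 k'.1).+1 * q1 ^+ (k.1 != k'.1).+1 *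
   q2 ^+ (k.2 != k'.2).+1)%:E.
Proof.
have -> : pair_sampled k `&` pair_sampled k' =
    \bigcap_(i in [set` sampling_indices k :|: sampling_indices k'])
      all_rvs h c1 c2 i @^-1` sampling_success i.
  by rewrite !pair_sampledE set_mem_setU bigcap_setU.
rewrite (prob_bigcap_independent indep); last exact: measurable_sampling_success.
pose pi (i : U + (T1 + T2)) :=
  match i with inl _ => p | inr (inl _) => q1 | inr (inr _) => q2 end.
have Psuccess i : P (all_rvs h c1 c2 i @^-1` sampling_success i) = (pi i)%:E.
  by case: i => [u|[t|t]]; [exact: h_lt | exact: c1_eq1 | exact: c2_eq1].
under eq_bigr do rewrite Psuccess.
rewrite prodEFin !big_sumType /= mulrA -!cards2 -!prodr_const.
by congr (_%:E); congr (_ * _ * _); apply: eq_bigl => x; rewrite !inE -!sum_eqE /= ?orbF.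
Qed.

Lemma measurable_pair_sampled k : measurable (pair_sampled k).
Proof.
rewrite pair_sampledE; apply: fin_bigcap_measurable => [|i _]; first exact: finite_finset.
by have := meas i measurableT _ (measurable_sampling_success i); rewrite setTI.
Qed.

Lemma prob_pair_sampled k : P (pair_sampled k) = (p * q1 * q2)%:E.
Proof. by rewrite -[pair_sampled k]setIid prob_pair_sampledI !eqxx !expr1. Qed.

Lemma Jsum_hat_indic (J2 : T2 -> U) (W : T1 -> R) (e1 e2 : R) :
  Jsum_hat J1 J2 W p e1 e2 h c1 c2 = fun w => \sum_(k : T1 * T2)
    p / (e1 * e2) * ((J1 k.1 == J2 k.2)%:R * W k.1) * \1_(pair_sampled k) w.
Proof.
apply/funext => w; rewrite /Jsum_hat mulr_sumr.
rewrite -(pair_bigA _ (fun t1 t2 =>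
  p / (e1 * e2) * ((J1 t1 == J2 t2)%:R * W t1) * \1_(pair_sampled (t1, t2)) w)) /=.
apply: eq_bigr => t1 _; rewrite mulr_sumr big_mkcond; apply: eq_bigr => t2 _ /=.
have [Jt|_] := eqVneq (J1 t1) (J2 t2); last by rewrite !(mul0r, mulr0).
rewrite /indic; have -> : (w \in pair_sampled (t1, t2)) =
    (h (J1 t1) w < p) && (c1 t1 w == 1) && (c2 t2 w == 1).
  apply/idP/idP.
    by move=> /set_mem [-> [-> ->]]; rewrite !eqxx.
  by move=> /andP[/andP[hw /eqP c1w] /eqP c2w]; apply: mem_set.
have repeat_test (a b c : bool) : a && b && a && c = a && b && c by case: a; case: b.
by rewrite -Jt repeat_test mul1r [_%:R * _]mulrC mulrA.
Qed.
End sampled_pairs.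

Section fiber_stats.
Context {R : realType} {U T1 : finType} (J1 : T1 -> U) (W : T1 -> R).

Lemma natr_card_fiber (T : finType) (J : T -> U) v :
  #|[set t | J t == v]|%:R = \sum_(t | J t == v) (1 : R).
Proof.
rewrite sumr_const; congr _%:R; apply: eq_card => t.
by apply/idP/idP => [/set_mem|Jt]; last exact: mem_set.
Qed.

Lemma card_fiber_mul_mean (f : T1 -> R) v :
  a_ R J1 v * ((\sum_(t | J1 t == v) f t) / a_ R J1 v) = \sum_(t | J1 t == v) f t.
Proof.
have [a0|a_neq0] := eqVneq (a_ R J1 v) 0; last by rewrite mulrC divfK.
rewrite a0 mul0r; apply/esym/big1 => t Jt.
move/eqP: a0; rewrite /a_ pnatr_eq0 => /eqP/card0_eq/(_ t).
by move=> /negbT/negP[]; exact: mem_set.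
Qed.

Lemma sum_fiber_mu v : \sum_(t | J1 t == v) W t = a_ R J1 v * mu_ J1 W v.
Proof. by rewrite card_fiber_mul_mean. Qed.

Lemma sum_fiber_sqr v :
  \sum_(t | J1 t == v) W t ^+ 2 = a_ R J1 v * (mu_ J1 W v ^+ 2 + sigma2_ J1 W v).
Proof.
rewrite mulrDr card_fiber_mul_mean.
have -> : \sum_(t | J1 t == v) (W t - mu_ J1 W v) ^+ 2 =
    \sum_(t | J1 t == v) W t ^+ 2 - 2 * mu_ J1 W v * \sum_(t | J1 t == v) W t +
    mu_ J1 W v ^+ 2 * \sum_(t | J1 t == v) 1.
  rewrite !mulr_sumr -sumrB -big_split /=; apply: eq_bigr => t _; ring.
rewrite -natr_card_fiber -/(a_ R J1 v) sum_fiber_mu; ring.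
Qed.
End fiber_stats.

Section fiber_sums.
Context {R : realType} {U : finType}.

Lemma sum_fiber_pairs (T : finType) (J : T -> U) (f g : T -> R) (q : R) v v' :
  \sum_(t | J t == v) \sum_(t' | J t' == v') f t * g t' * q ^+ (t != t').+1 =
  q ^+ 2 * (\sum_(t | J t == v) f t) * (\sum_(t' | J t' == v') g t') +
  (v == v')%:R * (q - q ^+ 2) * \sum_(t | J t == v) f t * g t.
Proof.
under eq_bigr do under eq_bigr do rewrite exprS_neq mulrDr.
under eq_bigr do rewrite big_split /=.
rewrite big_split /= -mulrA mulr_suml mulr_sumr; congr (_ + _).
  by apply: eq_bigr => t _; rewrite !mulr_sumr; apply: eq_bigr => t' _; ring.
rewrite mulr_sumr; apply: eq_bigr => t /eqP Jt.
rewrite big_mkcond (bigD1 t) //= eqxx Jt big1 ?addr0 => [|t' /negbTE t't].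
  by case: (v == v'); rewrite ?mul0r //= !mul1r mulrC.
by rewrite eq_sym in t't; rewrite t't mul0r mulr0 if_same.
Qed.

Lemma sum_outer_plus_diag (x y z : R) (A S B C : U -> R) :
  \sum_v \sum_v' x ^+ (v != v').+1 *
    (y ^+ 2 * A v * A v' + (v == v')%:R * (y - y ^+ 2) * S v) *
    (z ^+ 2 * B v * B v' + (v == v')%:R * (z - z ^+ 2) * C v) =
  (x * y * z * \sum_v A v * B v) ^+ 2 +
  \sum_v (x * (y ^+ 2 * A v ^+ 2 + (y - y ^+ 2) * S v) *
              (z ^+ 2 * B v ^+ 2 + (z - z ^+ 2) * C v)
          - (x * y * z * A v * B v) ^+ 2).
Proof.
pose D v := x * (y ^+ 2 * A v ^+ 2 + (y - y ^+ 2) * S v) *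
    (z ^+ 2 * B v ^+ 2 + (z - z ^+ 2) * C v) - (x * y * z * A v * B v) ^+ 2.
pose M v := x * y * z * A v * B v.
have split_diag v v' : x ^+ (v != v').+1 *
    (y ^+ 2 * A v * A v' + (v == v')%:R * (y - y ^+ 2) * S v) *
    (z ^+ 2 * B v * B v' + (v == v')%:R * (z - z ^+ 2) * C v) =
    M v * M v' + (v == v')%:R * D v'.
  by rewrite /M /D; case: eqVneq => [<-|_] /=; ring.
under eq_bigr do under eq_bigr do rewrite split_diag.
under eq_bigr do rewrite big_split /=.
rewrite big_split /= expr2 mulr_sumr big_distrlr /=; congr (_ + _).
  by apply: eq_bigr => v _; apply: eq_bigr => v' _; rewrite /M; ring.
apply: eq_bigr => v _.
rewrite (bigD1 v) //= eqxx mul1r big1 ?addr0 // => v' /negbTE.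
by rewrite eq_sym => ->; rewrite mul0r.
Qed.
End fiber_sums.

Section matching_pairs.
Context {R : realType} {U T1 T2 : finType} (J1 : T1 -> U) (J2 : T2 -> U).

Lemma sum_matching_pairs (f : T1 -> R) (g : T2 -> R) :
  \sum_(k : T1 * T2) (J1 k.1 == J2 k.2)%:R * (f k.1 * g k.2) =
  \sum_v (\sum_(t1 | J1 t1 == v) f t1) * (\sum_(t2 | J2 t2 == v) g t2).
Proof.
rewrite -(pair_bigA _ (fun t1 t2 => (J1 t1 == J2 t2)%:R * (f t1 * g t2))) /=.
rewrite (partition_big J1 predT) //=; apply: eq_bigr => v _.
rewrite mulr_suml; apply: eq_bigr => t1 /eqP <-.
rewrite mulr_sumr [RHS]big_mkcond; apply: eq_bigr => t2 _.
by rewrite eq_sym; case: eqP; rewrite ?mul1r ?mul0r.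
Qed.

Lemma sum_matching_pairs2 (f : T1 -> T1 -> R) (g : T2 -> T2 -> R) :
  \sum_(k : T1 * T2) \sum_(k' : T1 * T2)
    (J1 k.1 == J2 k.2)%:R * (J1 k'.1 == J2 k'.2)%:R * (f k.1 k'.1 * g k.2 k'.2) =
  \sum_v \sum_v' (\sum_(t1 | J1 t1 == v) \sum_(t1' | J1 t1' == v') f t1 t1') *
                 (\sum_(t2 | J2 t2 == v) \sum_(t2' | J2 t2' == v') g t2 t2').
Proof.
have inner k : \sum_(k' : T1 * T2)
    (J1 k.1 == J2 k.2)%:R * (J1 k'.1 == J2 k'.2)%:R * (f k.1 k'.1 * g k.2 k'.2) =
    \sum_v' (J1 k.1 == J2 k.2)%:R * ((\sum_(t1' | J1 t1' == v') f k.1 t1') *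
                                    (\sum_(t2' | J2 t2' == v') g k.2 t2')).
  rewrite -[RHS]mulr_sumr -sum_matching_pairs mulr_sumr.
  by under [RHS]eq_bigr do rewrite mulrA.
under eq_bigr do rewrite inner.
rewrite exchange_big [RHS]exchange_big /=; apply: eq_bigr => v' _.
exact: sum_matching_pairs.
Qed.

Lemma first_moment_matching (W : T1 -> R) (c s : R) :
  \sum_(k : T1 * T2) c * ((J1 k.1 == J2 k.2)%:R * W k.1) * s =
  c * (s * \sum_v (\sum_(t | J1 t == v) W t) * (\sum_(t | J2 t == v) 1)).
Proof.
rewrite -sum_matching_pairs !mulr_sumr; apply: eq_bigr => k _; ring.
Qed.

Lemma second_moment_matching (W : T1 -> R) (c x y z : R) :
  \sum_(k : T1 * T2) \sum_(k' : T1 * T2)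
    c * ((J1 k.1 == J2 k.2)%:R * W k.1) * (c * ((J1 k'.1 == J2 k'.2)%:R * W k'.1)) *
    (x ^+ (J1 k.1 != J1 k'.1).+1 * y ^+ (k.1 != k'.1).+1 * z ^+ (k.2 != k'.2).+1) =
  c ^+ 2 * \sum_v \sum_v' x ^+ (v != v').+1 *
    (y ^+ 2 * (\sum_(t | J1 t == v) W t) * (\sum_(t | J1 t == v') W t) +
     (v == v')%:R * (y - y ^+ 2) * \sum_(t | J1 t == v) W t ^+ 2) *
    (z ^+ 2 * (\sum_(t | J2 t == v) 1) * (\sum_(t | J2 t == v') 1) +
     (v == v')%:R * (z - z ^+ 2) * \sum_(t | J2 t == v) 1).
Proof.
pose f t t' := c ^+ 2 * x ^+ (J1 t != J1 t').+1 * (W t * W t' * y ^+ (t != t').+1).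
pose g (t t' : T2) := 1 * 1 * z ^+ (t != t').+1.
transitivity (\sum_(k : T1 * T2) \sum_(k' : T1 * T2)
    (J1 k.1 == J2 k.2)%:R * (J1 k'.1 == J2 k'.2)%:R * (f k.1 k'.1 * g k.2 k'.2)).
  by apply: eq_bigr => k _; apply: eq_bigr => k' _; rewrite /f /g; ring.
rewrite sum_matching_pairs2 mulr_sumr; apply: eq_bigr => v _.
rewrite mulr_sumr; apply: eq_bigr => v' _.
have -> : \sum_(t | J1 t == v) \sum_(t' | J1 t' == v') f t t' = c ^+ 2 * x ^+ (v != v').+1 *
    \sum_(t | J1 t == v) \sum_(t' | J1 t' == v') W t * W t' * y ^+ (t != t').+1.
  rewrite mulr_sumr; apply: eq_bigr => t /eqP Jt.
  by rewrite mulr_sumr; apply: eq_bigr => t' /eqP Jt'; rewrite /f Jt Jt'.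
rewrite !sum_fiber_pairs; under [X in _ * (_ + _ * X)]eq_bigr do rewrite mulr1.
under [X in _ * (_ + _ * X) * _]eq_bigr do rewrite -expr2.
ring.
Qed.
End matching_pairs.

Theorem theorem7 (R : realType) (d : measure_display) (Omega : measurableType d)
  (P : probability Omega R)
  (U T1 T2 : finType) (J1 : T1 -> U) (J2 : T2 -> U) (W : T1 -> R)
  (e1 e2 p : R)
  (he1 : 0 < e1 <= 1) (he2 : 0 < e2 <= 1)
  (hp : Num.max e1 e2 <= p <= 1)
  (h : U -> Omega -> R) (c1 : T1 -> Omega -> R) (c2 : T2 -> Omega -> R)
  (hmeas : forall i, measurable_fun setT (all_rvs h c1 c2 i))
  (hind : mutually_independent P (all_rvs h c1 c2))
  (hunif : forall v, uniform01 P (h v))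
  (hc1 : forall t, bernoulli_coin P (e1 / p) (c1 t))
  (hc2 : forall t, bernoulli_coin P (e2 / p) (c2 t)) :
  'V_P[Jsum_hat J1 J2 W p e1 e2 h c1 c2] =
  ((e2^-1 - p^-1) * beta1 J1 J2 W
   + (e1^-1 - p^-1) * beta2 J1 J2 W
   + (p / (e1 * e2) - e1^-1 - e2^-1 + p^-1) * beta3 J1 J2 W
   + (p^-1 - 1) * beta4 J1 J2 W)%:E.
Proof.
move: he1 he2 hp => /andP[e1_gt0 _] /andP[e2_gt0 _] /andP[max_le_p p_le1].
have p_gt0 : 0 < p by apply: lt_le_trans max_le_p; rewrite lt_max e1_gt0.
have h_lt u : P (h u @^-1` [set` `]-oo, p[]) = p%:E.
  by apply: uniform01_lt; rewrite ?(ltW p_gt0).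
have c1_eq1 t := (hc1 t).1; have c2_eq1 t := (hc2 t).1.
rewrite Jsum_hat_indic variance_indic_comb; last exact: measurable_pair_sampled hmeas.
under eq_bigr do under eq_bigr do rewrite (prob_pair_sampledI hind h_lt c1_eq1 c2_eq1) /=.
under [X in _ - X ^+ 2]eq_bigr do rewrite (prob_pair_sampled hind h_lt c1_eq1 c2_eq1) /=.
rewrite second_moment_matching first_moment_matching sum_outer_plus_diag.
congr (_%:E); rewrite mulrDr [in X in _ - X]exprMn addrAC subrr add0r.
rewrite mulr_sumr /beta1 /beta2 /beta3 /beta4 !mulr_sumr -!big_split /=.
apply: eq_bigr => v _.
rewrite sum_fiber_mu sum_fiber_sqr -!natr_card_fiber -/(b_ R J2 v).
by field; rewrite !gt_eqF.
Qed.
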